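(* Suppose $s_0,s_1,s_2,s_3\in\sum\mathbb{R}(x,y)^2$ satisfy $s_0\,xy=s_1+s_2\,x+s_3\,y$. Then $s_0=s_1=s_2=s_3=0$.
   Context: $\mathbb{R}(x,y)$ is the field of rational functions in two real variables and $\sum\mathbb{R}(x,y)^2$ is the set of finite sums of squares of its elements. *)

From HB Require Import structures.
From mathcomp Require Import all_boot all_order all_algebra.
Set Implicit Arguments. Unset Strict Implicit. Unset Printing Implicit Defensive.
Import Order.TTheory GRing.Theory Num.Theory.
Local Open Scope ring_scope.

(* R(x,y) := field of fractions of R[y][x] = R[x,y]. *)
Definition ratfun2 (R : rcfType) := {fraction {poly {poly R}}}.

(* the variable x : outer polynomial variable; y : inner variable *)
Definition varX (R : rcfType) : ratfun2 R := FracField.tofrac ('X : {poly {poly R}}).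
Definition varY (R : rcfType) : ratfun2 R := FracField.tofrac (('X : {poly R})%:P : {poly {poly R}}).

Definition is_sos (K : comNzRingType) (f : K) : Prop :=
  exists s : seq K, f = \sum_(g <- s) g ^+ 2.

(* After clearing denominators the s_i become sums of squares of polynomials
   in R[y][x].  Order monomials lexicographically, x before y.  Leading terms
   of nonzero squares have even degree in x and in y and a positive
   coefficient, so they cannot cancel in a sum: a nonzero sum of squares has a
   leading monomial x^(2i) y^(2j).  The nonzero terms among s1, s2 x, s3 y and
   s0 x y therefore have leading monomials with four different parity
   patterns, so the leading term of s1 + s2 x + s3 y survives and has the
   wrong parity to be that of s0 x y; hence every term vanishes. *)
From mathcomp Require Import all_boot all_order all_algebra.
Import Order.TTheory GRing.Theory Num.Theory.
Local Open Scope ring_scope.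

Set Implicit Arguments.
Unset Strict Implicit.
Unset Printing Implicit Defensive.

Definition strict_cone (A : idomainType) (C : A -> Prop) :=
  [/\ forall a, C a -> a != 0,
      forall a b, C a -> C b -> C (a + b)
    & forall a, a != 0 -> C (a ^+ 2)].

Lemma strict_cone_sos (A : idomainType) (C : A -> Prop) (f : A) :
  strict_cone C -> is_sos f -> f = 0 \/ C f.
Proof.
move=> [_ addC sqrC] [s ->]; elim: s => [|g s IH]; first by left; rewrite big_nil.
rewrite big_cons; have [->|nz_g] := eqVneq g 0; first by rewrite expr0n add0r.
right; case: IH => [->|Cs]; first by rewrite addr0; apply: sqrC.
by apply: addC => //; apply: sqrC.
Qed.

Lemma strict_cone_gt0 (R : realDomainType) : strict_cone (fun a : R => 0 < a).
Proof.
split; [exact: lt0r_neq0 | exact: addr_gt0 | move=> a nz_a].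
by rewrite lt0r sqrf_eq0 nz_a sqr_ge0.
Qed.

Section LeadingCoefficient.
Variable A : idomainType.
Implicit Types p q : {poly A}.

Lemma size_lead_coefD_eq p q :
  size p = size q -> lead_coef p + lead_coef q != 0 ->
  size (p + q) = size p /\ lead_coef (p + q) = lead_coef p + lead_coef q.
Proof.
move=> eq_size nz_lc.
have top_coef : (p + q)`_(size p).-1 = lead_coef p + lead_coef q.
  by rewrite coefD /lead_coef eq_size.
have le_size : (size (p + q)%R <= size p)%N.
  by rewrite (leq_trans (size_polyD p q)) // -eq_size maxnn.
have ge_size : (size p <= size (p + q)%R)%N.
  case: (posnP (size p)) => [-> // | p_gt0].
  rewrite leqNgt -[size p](prednK p_gt0) ltnS; apply: contra nz_lc.
  by move=> /leq_sizeP/(_ _ (leqnn _)); rewrite top_coef => ->.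
have eq_sizeD : size (p + q) = size p by apply/eqP; rewrite eqn_leq le_size.
by rewrite lead_coefE eq_sizeD.
Qed.

Lemma strict_cone_lead (C : A -> Prop) : strict_cone C ->
  strict_cone (fun p : {poly A} => odd (size p) /\ C (lead_coef p)).
Proof.
case=> nzC addC sqrC; split.
- by move=> p [odd_p _]; rewrite -size_poly_eq0; case: (size p) odd_p.
- move=> p q [odd_p Cp] [odd_q Cq]; case: (ltngtP (size p) (size q)) => cmp.
  + by rewrite addrC size_polyDl // lead_coefDl.
  + by rewrite size_polyDl // lead_coefDl.
  + have [-> ->] := size_lead_coefD_eq cmp (nzC _ (addC _ _ Cp Cq)).
    by split; last exact: addC.
- move=> g nz_g; rewrite lead_coef_exp; split; last by apply: sqrC; rewrite lead_coef_eq0.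
  rewrite expr2 size_mul // (polySpred nz_g) addSn /= addnS.
  by rewrite /= addnn odd_double.
Qed.

End LeadingCoefficient.

Section LeadParity.
Variable A : idomainType.
Implicit Types p q : {poly {poly A}}.
Local Notation Y := ('X%:P : {poly {poly A}}).

(* Sizes are degrees plus one: parity [(true, true)] means that the leading
   term in lexicographic order has even degree in both variables. *)
Definition lead_parity p := (odd (size p), odd (size (lead_coef p))).

Definition parity_in (cs : seq (bool * bool)) p :=
  p != 0 -> lead_parity p \in cs.

Lemma lead_parityMX p : p != 0 ->
  lead_parity (p * 'X) = (~~ (lead_parity p).1, (lead_parity p).2).
Proof. by move=> nz_p; rewrite /lead_parity size_mulX // lead_coefMX. Qed.

Lemma lead_parityMY p : p != 0 ->
  lead_parity (p * Y) = ((lead_parity p).1, ~~ (lead_parity p).2).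
Proof.
move=> nz_p; rewrite /lead_parity mulrC mul_polyC size_scale ?polyX_eq0 //.
by rewrite lead_coefZ mulrC size_mulX ?lead_coef_eq0.
Qed.

Lemma lead_parityD p q : p != 0 -> q != 0 -> lead_parity p != lead_parity q ->
  p + q != 0 /\ lead_parity (p + q) \in [:: lead_parity p; lead_parity q].
Proof.
move=> nz_p nz_q neq_pq; rewrite !inE /lead_parity.
case: (ltngtP (size p) (size q)) => cmp.
- rewrite addrC -size_poly_eq0 size_polyDl // lead_coefDl // size_poly_eq0.
  by rewrite nz_q eqxx orbT.
- rewrite -size_poly_eq0 size_polyDl // lead_coefDl // size_poly_eq0.
  by rewrite nz_p eqxx.
- have neq_lc : size (lead_coef p) != size (lead_coef q).
    by apply: contraNneq neq_pq => eq_lc; rewrite /lead_parity cmp eq_lc.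
  have nz_lcD : lead_coef p + lead_coef q != 0.
    apply: contraNneq neq_lc => /eqP; rewrite addr_eq0 => /eqP ->.
    by rewrite size_polyN.
  have [size_pq lc_pq] := size_lead_coefD_eq cmp nz_lcD.
  split; first by rewrite -size_poly_eq0 size_pq size_poly_eq0.
  rewrite size_pq lc_pq cmp.
  case: (ltngtP (size (lead_coef p)) (size (lead_coef q))) => cmp_lc.
  + by rewrite addrC size_polyDl // eqxx orbT.
  + by rewrite size_polyDl // eqxx.
  + by rewrite cmp_lc eqxx in neq_lc.
Qed.

Lemma parity_in_eq0 cs1 cs2 p : parity_in cs1 p -> parity_in cs2 p ->
  all [predC cs2] cs1 -> p = 0.
Proof.
move=> cs1p cs2p /allP disj; apply/eqP; apply: contraT => nz_p.
by have := disj _ (cs1p nz_p); rewrite inE cs2p.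
Qed.

Lemma parity_inD cs1 cs2 p q : parity_in cs1 p -> parity_in cs2 q ->
  all [predC cs2] cs1 -> parity_in (cs1 ++ cs2) (p + q).
Proof.
move=> cs1p cs2q /allP disj; have [->|nz_p] := eqVneq p 0.
  by rewrite add0r => /cs2q; rewrite mem_cat orbC => ->.
have [->|nz_q] := eqVneq q 0.
  by rewrite addr0 => /cs1p; rewrite mem_cat => ->.
have neq_pq : lead_parity p != lead_parity q.
  by apply: contraTneq (cs2q nz_q) => <-; apply: disj; apply: cs1p.
have [_] := lead_parityD nz_p nz_q neq_pq.
by rewrite /parity_in !inE mem_cat => /orP[] /eqP -> _; rewrite ?cs1p ?cs2q ?orbT.
Qed.

Lemma parity_in_addr_eq0 cs1 cs2 p q : parity_in cs1 p -> parity_in cs2 q ->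
  all [predC cs2] cs1 -> p + q = 0 -> p = 0 /\ q = 0.
Proof.
move=> cs1p cs2q /allP disj; have [->|nz_p] := eqVneq p 0; first by rewrite add0r.
have [->|nz_q] := eqVneq q 0; first by rewrite addr0.
have neq_pq : lead_parity p != lead_parity q.
  by apply: contraTneq (cs2q nz_q) => <-; apply: disj; apply: cs1p.
by have [/eqP] := lead_parityD nz_p nz_q neq_pq.
Qed.

Lemma parity_inMX c p :
  parity_in [:: c] p -> parity_in [:: (~~ c.1, c.2)] (p * 'X).
Proof.
rewrite /parity_in mulf_eq0 negb_or => /[swap] /andP[nz_p _] /(_ nz_p).
by rewrite !inE lead_parityMX // => /eqP ->.
Qed.

Lemma parity_inMY c p :
  parity_in [:: c] p -> parity_in [:: (c.1, ~~ c.2)] (p * Y).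
Proof.
rewrite /parity_in mulf_eq0 negb_or => /[swap] /andP[nz_p _] /(_ nz_p).
by rewrite !inE lead_parityMY // => /eqP ->.
Qed.
End LeadParity.

Lemma sos_parity_in (R : realDomainType) (P : {poly {poly R}}) :
  is_sos P -> parity_in [:: (true, true)] P.
Proof.
move=> /(strict_cone_sos (strict_cone_lead (strict_cone_lead (@strict_cone_gt0 R)))).
case=> [-> | [odd_P [odd_lc _]]]; first by rewrite /parity_in eqxx.
by rewrite /parity_in /lead_parity odd_P odd_lc.
Qed.

Lemma sos_polyXY_eq0 (R : realDomainType) (P0 P1 P2 P3 : {poly {poly R}}) :
  is_sos P0 -> is_sos P1 -> is_sos P2 -> is_sos P3 ->
  P0 * ('X * 'X%:P) = P1 + P2 * 'X + P3 * 'X%:P ->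
  [/\ P0 = 0, P1 = 0, P2 = 0 & P3 = 0].
Proof.
move=> /sos_parity_in S0 /sos_parity_in S1 /sos_parity_in S2 /sos_parity_in S3.
move=> eqXY.
have S12 := parity_inD S1 (parity_inMX S2) isT.
have S123 := parity_inD S12 (parity_inMY S3) isT.
have S0XY := parity_inMY (parity_inMX S0).
rewrite -mulrA eqXY in S0XY.
have rhs0 := parity_in_eq0 S0XY S123 isT.
have [/(parity_in_addr_eq0 S1 (parity_inMX S2) isT) [P1_0 P2X_0] P3Y_0] :=
  parity_in_addr_eq0 S12 (parity_inMY S3) isT rhs0.
move: eqXY P2X_0 P3Y_0; rewrite rhs0 => /eqP + /eqP + /eqP.
rewrite !mulf_eq0 polyC_eq0 !polyX_eq0 !orbF.
by move=> /eqP P0_0 /eqP P2_0 /eqP P3_0.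
Qed.

Section ClearDenominators.
Variable T : idomainType.
Local Notation "x %:F" := (@FracField.tofrac T x).

Definition clears_denominator (d : T) (g : {fraction T}) :=
  exists p : T, g * d%:F = p%:F.

Lemma fraction_ratio (x : {fraction T}) :
  exists a b, b != 0 /\ x = a%:F / b%:F.
Proof.
elim/quotW: x => r; exists r.1, r.2; split; first exact: denom_ratioP.
rewrite /GRing.inv /= /GRing.mul /=; unlock FracField.tofrac.
rewrite -FracField.pi_inv -FracField.pi_mul; apply/eqmodP.
rewrite /= FracField.equivfE /= /FracField.invf /FracField.mulf.
by rewrite !numden_Ratio ?mulf_neq0 ?oner_neq0 ?denom_ratioP // mul1r mulr1 mulrC.
Qed.

Lemma common_denominator (s : seq {fraction T}) :
  exists2 d : T, d != 0 & forall g, g \in s -> clears_denominator d g.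
Proof.
elim: s => [|g s [d nz_d IH]]; first by exists 1; rewrite ?oner_neq0.
have [a [b [nz_b ->]]] := fraction_ratio g.
exists (d * b) => [|h]; first by rewrite mulf_neq0.
rewrite in_cons => /predU1P[->|/IH [p eq_p]].
  exists (a * d); rewrite !tofracM mulrA mulrAC -[_ / _ * _]mulrA.
  by rewrite mulVf ?mulr1 // tofrac_eq0.
by exists (p * b); rewrite tofracM mulrA eq_p tofracM.
Qed.

Lemma sos_clears_denominator (d : T) (s : seq {fraction T}) :
  (forall g, g \in s -> clears_denominator d g) ->
  exists2 P : T, is_sos P & (\sum_(g <- s) g ^+ 2) * (d ^+ 2)%:F = P%:F.
Proof.
elim: s => [|g s IH] dens.
  by exists 0; [exists [::]|]; rewrite !big_nil ?mul0r ?tofrac0.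
have [p eq_p] := dens g (mem_head _ _).
have [P [l ->] eq_P] : exists2 P : T, is_sos P &
    (\sum_(g <- s) g ^+ 2) * (d ^+ 2)%:F = P%:F.
  by apply: IH => h h_s; apply: dens; rewrite in_cons h_s orbT.
exists (p ^+ 2 + \sum_(f <- l) f ^+ 2); first by exists (p :: l); rewrite big_cons.
by rewrite big_cons mulrDl eq_P tofracD !tofracXn -eq_p exprMn.
Qed.

Lemma sos_common_numerators (ls : seq (seq {fraction T})) :
  exists2 d : T, d != 0 & forall l, l \in ls ->
    exists2 P : T, is_sos P & (\sum_(g <- l) g ^+ 2) * (d ^+ 2)%:F = P%:F.
Proof.
have [d nz_d dens] := common_denominator (flatten ls).
exists d => // l l_ls; apply: sos_clears_denominator => g g_l.
by apply: dens; apply/flattenP; exists l.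
Qed.

End ClearDenominators.

Theorem mainTheorem5 (R : rcfType) (s0 s1 s2 s3 : ratfun2 R) :
  is_sos s0 -> is_sos s1 -> is_sos s2 -> is_sos s3 ->
  s0 * (varX R * varY R) = s1 + s2 * varX R + s3 * varY R ->
  [/\ s0 = 0, s1 = 0, s2 = 0 & s3 = 0].
Proof.
move=> [l0 ->] [l1 ->] [l2 ->] [l3 ->] eq_s.
have [d nz_d nums] := sos_common_numerators [:: l0; l1; l2; l3].
have [P0 sos0 eq0] := nums l0 (mem_head _ _).
have [P1 sos1 eq1] := nums l1 ltac:(by rewrite !inE eqxx orbT).
have [P2 sos2 eq2] := nums l2 ltac:(by rewrite !inE eqxx !orbT).
have [P3 sos3 eq3] := nums l3 ltac:(by rewrite !inE eqxx !orbT).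
have eq_poly : P0 * ('X * 'X%:P) = P1 + P2 * 'X + P3 * 'X%:P.
  apply/eqP; rewrite -tofrac_eq !tofracD !tofracM -eq0 -eq1 -eq2 -eq3.
  rewrite mulrAC [_ * (_ * _)]eq_s !mulrDl.
  by rewrite [_ * varX R * _]mulrAC [_ * varY R * _]mulrAC.
have nz_d2 : FracField.tofrac (d ^+ 2) != 0 by rewrite tofrac_eq0 expf_neq0.
have [P0_0 P1_0 P2_0 P3_0] := sos_polyXY_eq0 sos0 sos1 sos2 sos3 eq_poly.
by split; apply: (mulIf nz_d2);
  rewrite mul0r ?eq0 ?eq1 ?eq2 ?eq3 ?P0_0 ?P1_0 ?P2_0 ?P3_0 tofrac0.
Qed.
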